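(* Let $\mathcal{S}=\langle\mathcal{L},\vdash\rangle$ be a logic whose signature contains a unary operator $\neg$, and let $\varrho\subseteq\mathcal{P}(\mathcal{L})\times\mathcal{L}$ have finite reach. Then there exist $\alpha,\beta\in\mathcal{L}$ with $\{\alpha,\neg\alpha\}\not\vdash^\varrho\beta$, and there exist $\alpha,\beta\in\mathcal{L}$ with $\{\alpha,\neg\alpha\}\not\vdash^{p\varrho}\beta$; i.e., both companions are paraconsistent with respect to $\neg$.
   Context: A logic is a pair $\langle\mathcal{L},\vdash\rangle$ where $\mathcal{L}$ is the formula algebra over a nonempty set of variables $V$ of some finite signature and $\vdash\subseteq\mathcal{P}(\mathcal{L})\times\mathcal{L}$ is arbitrary. For $\varrho\subseteq\mathcal{P}(\mathcal{L})\times\mathcal{L}$: $\Gamma\vdash^\varrho\alpha$ iff there is $\Delta\subseteq\Gamma$ with $(\Delta,\alpha)\in\varrho$ and $\Delta\vdash\alpha$; $\Gamma\vdash^{p\varrho}\alpha$ iff there is a nonempty $\Delta\subseteq\Gamma$ with $(\Delta,\alpha)\in\varrho$ and $\Delta\vdash\alpha$. A relation $\varrho\subseteq\mathcal{P}(\mathcal{L})\times\mathcal{L}$ has finite reach if for every $\Delta\subseteq\mathcal{L}$ the set $\{\alpha\mid(\Delta,\alpha)\in\varrho\}$ is finite. *)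

From HB Require Import structures.
From mathcomp Require Import all_boot.
From mathcomp Require Import boolp classical_sets cardinality.

Set Implicit Arguments.
Unset Strict Implicit.
Unset Printing Implicit Defensive.

Local Open Scope classical_set_scope.

Inductive formula (V : Type) (F : finType) (ar : F -> nat) : Type :=
  | Var : V -> formula V ar
  | App : forall f : F, ('I_(ar f) -> formula V ar) -> formula V ar.

Arguments Var {V F ar} _.
Arguments App {V F ar} f _.

(* The unary connective built from a symbol neg (intended: ar neg = 1). *)
Definition negf (V : Type) (F : finType) (ar : F -> nat) (neg : F)
  (a : formula V ar) : formula V ar := App neg (fun _ => a).

Definition finite_reach (L : Type) (rho : set L -> L -> Prop) : Prop :=
  forall D : set L, finite_set [set a | rho D a].

Definition companion (L : Type) (rho vdash : set L -> L -> Prop)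
  (G : set L) (a : L) : Prop :=
  exists D : set L, D `<=` G /\ rho D a /\ vdash D a.

Definition pcompanion (L : Type) (rho vdash : set L -> L -> Prop)
  (G : set L) (a : L) : Prop :=
  exists D : set L, D !=set0 /\ D `<=` G /\ rho D a /\ vdash D a.

(* A companion can only derive formulas in the reach of some subset of the
   premises.  For finitely many premises, such as {a, ~a}, finite reach makes
   the union of these reaches finite, whereas the iterated negations of a
   variable are pairwise distinct, so some formula lies outside it. *)
From mathcomp Require Import all_boot finmap.
From mathcomp Require Import boolp classical_sets cardinality.
From Stdlib Require Import Eqdep_dec.
Set Implicit Arguments.
Unset Strict Implicit.
Unset Printing Implicit Defensive.

Local Open Scope classical_set_scope.

Lemma finite_subsets (T : Type) (A : set T) :
  finite_set A -> finite_set [set B | B `<=` A].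
Proof.
elim/Pchoice: T => T in A *.
move=> /finite_fsetP[X ->]; pose embed (S : {set X}) := val @` [set x | x \in S].
apply: (sub_finite_set _ (finite_image embed (@finite_finset _ setT))).
move=> B BX; exists (finset (fun x : X => `[< B (val x) >])) => //.
apply/seteqP; split=> [_ [x + <-]|y By].
  by rewrite /= inE => /asboolP.
by exists [` BX y By]%fset; rewrite //= inE; apply/asboolP.
Qed.

Section Companions.

Variables (L : Type) (rho vdash : set L -> L -> Prop).

Definition subset_reach (G : set L) : set L :=
  \bigcup_(D in [set D | D `<=` G]) [set a | rho D a].

Lemma finite_subset_reach (G : set L) :
  finite_reach rho -> finite_set G -> finite_set (subset_reach G).
Proof.
by move=> rho_fin G_fin; apply: bigcup_finite (finite_subsets G_fin) _ => D _.
Qed.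

Lemma companion_subset_reach (G : set L) (a : L) :
  companion rho vdash G a -> subset_reach G a.
Proof. by case=> D [DG [rDa _]]; exists D. Qed.

Lemma pcompanion_companion (G : set L) (a : L) :
  pcompanion rho vdash G a -> companion rho vdash G a.
Proof. by case=> D [_ DGa]; exists D. Qed.

Lemma exists_not_companion (G : set L) :
  infinite_set [set: L] -> finite_reach rho -> finite_set G ->
  exists b, ~ companion rho vdash G b.
Proof.
move=> L_inf rho_fin G_fin.
have [b [_ /= not_reach_b]] :=
  infinite_setN0 (infinite_setD L_inf (finite_subset_reach rho_fin G_fin)).
by exists b => /companion_subset_reach.
Qed.

End Companions.

Section IteratedNegation.

Variables (V : Type) (F : finType) (ar : F -> nat) (neg : F).
Hypothesis unary_neg : ar neg = 1%N.

Lemma negf_inj : injective (@negf V F ar neg).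
Proof.
move=> a b [/(inj_pair2_eq_dec _ (@eq_comparable F) _ _ _ _) ab].
have i : 'I_(ar neg) by rewrite unary_neg; exact: ord0.
exact: (congr1 (fun g => g i) ab).
Qed.

Lemma iter_negf_Var_inj (v : V) :
  injective (fun n => iter n (negf neg) (Var v : formula V ar)).
Proof. by elim=> [|m IH] [|n] //= /negf_inj /IH ->. Qed.

Lemma infinite_formula : inhabited V -> infinite_set [set: formula V ar].
Proof.
case=> v fin_formula; apply: infinite_nat.
rewrite -(preimage_setT (fun n => iter n (negf neg) (Var v : formula V ar))).
by apply: finite_preimage fin_formula => m n _ _ /iter_negf_Var_inj.
Qed.

End IteratedNegation.

Theorem corollary3p16 (V : Type) (hV : inhabited V) (F : finType) (ar : F -> nat)
  (neg : F) (Hneg : ar neg = 1%N)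
  (vdash : set (formula V ar) -> formula V ar -> Prop)
  (rho : set (formula V ar) -> formula V ar -> Prop)
  (hrho : finite_reach rho) :
  (exists a b : formula V ar, ~ companion rho vdash [set a; negf neg a] b) /\
  (exists a b : formula V ar, ~ pcompanion rho vdash [set a; negf neg a] b).
Proof.
have [v] := hV; have [b not_vb] := exists_not_companion vdash
  (infinite_formula Hneg hV) hrho (finite_set2 (Var v) (negf neg (Var v))).
split; exists (Var v), b => //.
by apply: contra_not not_vb; apply: pcompanion_companion.
Qed.
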